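(* Let $D$ be a discrete space, $M$ a Hausdorff space, $\pi:D\to M$ any map, and $\kappa$ a cardinal. If the power $M^\kappa$ is countably compact, then the power $(D\cup_\pi M)^\kappa$ is countably compact.
   Context: For a discrete space $D$: if $D$ is infinite, $\alpha D=D\cup\{\infty\}$ denotes its one-point (Aleksandrov) compactification; if $D$ is finite, $\alpha D=D\cup\{\infty\}$ is the topological sum of $D$ and a singleton $\{\infty\}$ with $\infty\notin D$. For a map $\pi:D\to M$ into a $T_1$ space $M$, $D\cup_\pi M$ is the subspace $\{(x,\pi(x)):x\in D\}\cup(\{\infty\}\times M)$ of $\alpha D\times M$. A space is countably compact if every countable open cover has a finite subcover. *)

From Stdlib Require Import List Arith.
Set Implicit Arguments.

Definition is_topology {X : Type} (O : (X -> Prop) -> Prop) : Prop :=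
  O (fun _ => True) /\
  (forall (I : Type) (F : I -> X -> Prop),
      (forall i, O (F i)) -> O (fun x => exists i, F i x)) /\
  (forall A B : X -> Prop, O A -> O B -> O (fun x => A x /\ B x)).

Definition hausdorff {X : Type} (O : (X -> Prop) -> Prop) : Prop :=
  forall x y : X, x <> y ->
    exists U V : X -> Prop, O U /\ O V /\ U x /\ V y /\ (forall z, ~ (U z /\ V z)).

(* Every countable open cover has a finite subcover.  Countable covers are
   indexed by nat (finite nonempty covers can be padded by repetition). *)
Definition countably_compact {X : Type} (O : (X -> Prop) -> Prop) : Prop :=
  forall U : nat -> X -> Prop,
    (forall n, O (U n)) -> (forall x, exists n, U n x) ->
    exists N, forall x, exists n, n < N /\ U n x.

(* alpha D = D + {oo} (oo = None): for D infinite this is the one-point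
   compactification of the discrete space D; for D finite it is the
   topological sum of D and the isolated point oo. *)
Definition alpha_open (D : Type) (U : option D -> Prop) : Prop :=
  U None -> exists l : list D, forall d : D, ~ U (Some d) -> In d l.

Definition prod_open {X Y : Type} (OX : (X -> Prop) -> Prop) (OY : (Y -> Prop) -> Prop)
  (U : X * Y -> Prop) : Prop :=
  forall p, U p -> exists (A : X -> Prop) (B : Y -> Prop),
    OX A /\ OY B /\ A (fst p) /\ B (snd p) /\ (forall q, A (fst q) -> B (snd q) -> U q).

Definition subspace_open {X : Type} (O : (X -> Prop) -> Prop) (P : X -> Prop)
  (U : {x : X | P x} -> Prop) : Prop :=
  exists V : X -> Prop, O V /\ forall s, U s <-> V (proj1_sig s).

Definition power_open (K : Type) {X : Type} (O : (X -> Prop) -> Prop)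
  (U : (K -> X) -> Prop) : Prop :=
  forall f, U f -> exists (l : list K) (V : K -> X -> Prop),
    (forall k, O (V k)) /\ (forall k, V k (f k)) /\
    (forall g, (forall k, In k l -> V k (g k)) -> U g).

(* D \cup_pi M : the subspace {(x, pi x) : x in D} \cup ({oo} x M) of alpha D x M. *)
Definition adj_pred {D M : Type} (pi : D -> M) (p : option D * M) : Prop :=
  match fst p with
  | Some d => snd p = pi d
  | None => True
  end.

Definition adj_space {D M : Type} (pi : D -> M) : Type := {p : option D * M | adj_pred pi p}.

Definition adj_open {D M : Type} (OM : (M -> Prop) -> Prop) (pi : D -> M)
  : (adj_space pi -> Prop) -> Prop :=
  subspace_open (prod_open (@alpha_open D) OM) (adj_pred pi).
Arguments power_open K {X} O U.
Arguments adj_open {D M} OM pi U.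

From Stdlib Require Import List Lia.
From mathcomp Require Import ssreflect ssrfun ssrbool boolp classical_sets filter.

(* We work with the sequential characterisation of
   countable compactness: a space is countably compact iff every sequence
   has a cluster point (a point each of whose neighbourhoods is visited at
   arbitrarily late times).  Let f be a sequence in (D \cup_pi M)^K and h
   its projection to M^K.  Countable compactness of M^K gives a cluster
   point g of h.  The sets of late times at which h visits a neighbourhood
   of g form a proper filter on nat; we extend it to an ultrafilter p, along
   which h converges to g, hence every coordinate h(-)(k) converges to g k.
   An ultrafilter limit in D \cup_pi M of the coordinate f(-)(k) then exists:
   it is (d, pi d) if p-almost all f N k lie over the point d of D, and
   (oo, g k) otherwise, because the neighbourhoods of oo in alpha D are
   cofinite.  Limits along p of all coordinates give a limit along p in the
   power, and a limit along an ultrafilter containing all tails of nat is a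
   cluster point. *)

Lemma open_ext {X : Type} {O : (X -> Prop) -> Prop} {A B : X -> Prop} :
  O A -> (forall x, A x <-> B x) -> O B.
Proof.
move=> OA AB; suff -> : B = A by [].
by rewrite funeqE => x; rewrite propeqE; split=> /AB.
Qed.

Lemma power_is_topology (K : Type) {X : Type} {O : (X -> Prop) -> Prop} :
  is_topology O -> is_topology (power_open K O).
Proof.
move=> [OT [OU OI]]; split; [|split].
- by move=> f _; exists nil, (fun _ _ => True).
- move=> I F OF f [i Fif].
  have [l [V [OV [Vf VF]]]] := OF i f Fif.
  by exists l, V; split; [|split] => // g /VF Fig; exists i.
- move=> A B OA OB f [Af Bf].
  have [l1 [V1 [OV1 [V1f V1A]]]] := OA f Af.
  have [l2 [V2 [OV2 [V2f V2B]]]] := OB f Bf.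
  exists (l1 ++ l2), (fun k x => V1 k x /\ V2 k x); split; [|split].
  + by move=> k; apply: OI.
  + by move=> k.
  + move=> g Vg; split; [apply: V1A|apply: V2B] => k kl.
    * by case: (Vg k) => //; apply/in_app_iff; left.
    * by case: (Vg k) => //; apply/in_app_iff; right.
Qed.

Lemma power_open_coord {K X : Type} {O : (X -> Prop) -> Prop} {B : X -> Prop} (k : K) :
  is_topology O -> O B -> power_open K O (fun f => B (f k)).
Proof.
move=> [OT _] OB f Bfk; exists (k :: nil), (fun k' x => k' = k -> B x).
split; [|split].
- move=> k'; have [->|nkk'] := pselect (k' = k).
  + by apply: (open_ext OB) => x; split=> [Bx _|]; [|apply].
  + by apply: (open_ext OT) => x; split=> // _ /nkk'.
- by move=> k' ->.
- by move=> g /(_ k); apply=> //; left.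
Qed.

Definition cluster {X : Type} (O : (X -> Prop) -> Prop) (h : nat -> X) (x : X) : Prop :=
  forall W, O W -> W x -> forall n, exists N, n <= N /\ W (h N).

(* In a countably compact space every sequence has a cluster point: otherwise
   the open sets U n of points having a neighbourhood avoided by h after time
   n would form a countable open cover with no finite subcover. *)
Lemma countably_compact_cluster {X : Type} {O : (X -> Prop) -> Prop} :
  is_topology O -> countably_compact O -> forall h : nat -> X, exists x, cluster O h x.
Proof.
move=> [_ [OU _]] cc h; apply: contrapT => no_cluster.
pose avoiding n := {W : X -> Prop | O W /\ forall N, n <= N -> ~ W (h N)}.
pose U n x := exists W : avoiding n, proj1_sig W x.
have [N UN] : exists N, forall x, exists n, n < N /\ U n x.
  apply: cc => [n|x]; first exact: OU (fun W => proj1 (proj2_sig W)).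
  apply: contrapT => x_uncovered; apply: no_cluster; exists x => W OW Wx n.
  apply: contrapT => W_avoided; apply: x_uncovered; exists n.
  by exists (exist _ W (conj OW (fun N nN WhN => W_avoided (ex_intro _ N (conj nN WhN))))).
have [n [nN [W WhN]]] := UN (h N).
have [_ W_avoids] := proj2_sig W.
by apply: (W_avoids N) WhN; lia.
Qed.

(* Conversely, if every sequence has a cluster point the space is countably
   compact: a cover without finite subcover yields a sequence whose N-th term
   avoids U 0, ..., U (N-1), and a cluster point of it lies in no U n. *)
Lemma cluster_countably_compact {X : Type} {O : (X -> Prop) -> Prop} :
  (forall h : nat -> X, exists x, cluster O h x) -> countably_compact O.
Proof.
move=> has_cluster U OU cover; apply: contrapT => no_finite_subcover.
have escape N : exists x, forall n, n < N -> ~ U n x.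
  apply: contrapT => all_covered; apply: no_finite_subcover; exists N => x.
  apply: contrapT => x_escapes; apply: all_covered; exists x => n nN Unx.
  by apply: x_escapes; exists n.
have [h hN] := choice escape.
have [x x_cl] := has_cluster h.
have [n Unx] := cover x.
have [N [nN UnhN]] := x_cl _ (OU n) Unx (S n).
exact: hN N n nN UnhN.
Qed.

Definition limit_along {I X : Type} (O : (X -> Prop) -> Prop) (p : set_system I)
  (x : I -> X) (y : X) : Prop :=
  forall V, O V -> V y -> p (fun i => V (x i)).

Section FilterLimits.
Context {I : Type} {p : set_system I}.

Lemma filter_forall_list {T : Type} {p_filter : Filter p} (A : T -> I -> Prop)
  (l : list T) :
  (forall t, In t l -> p (A t)) -> p (fun i => forall t, In t l -> A t i).
Proof.
elim: l => [_|t l IHl pA]; first by apply: filterS filterT => i _ t [].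
apply: filterS (filterI (pA t (or_introl erefl)) (IHl (fun t' tl => pA t' (or_intror tl)))).
by move=> i [Ati Ali] t' [<-|t'l] //; apply: Ali.
Qed.

Lemma ultra_avoid_list {T : Type} {p_ultra : UltraFilter p} (A : T -> I -> Prop)
  (l : list T) :
  (forall t, ~ p (A t)) -> p (fun i => forall t, In t l -> ~ A t i).
Proof.
move=> notpA; apply: filter_forall_list => t _.
by case: (in_ultra_setVsetC (A t) p_ultra) => // /notpA.
Qed.

Lemma power_limit {K X : Type} {O : (X -> Prop) -> Prop} {p_filter : Filter p}
  {f : I -> K -> X} {G : K -> X} :
  (forall k, limit_along O p (fun i => f i k) (G k)) -> limit_along (power_open K O) p f G.
Proof.
move=> coord_lim W OW WG; have [l [V [OV [VG VW]]]] := OW G WG.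
apply: filterS (filter_forall_list (fun k i => V k (f i k)) l _) => [i|k _].
- exact: VW.
- exact: coord_lim.
Qed.

Lemma coord_limit {K X : Type} {O : (X -> Prop) -> Prop} {f : I -> K -> X} {G : K -> X}
  (k : K) :
  is_topology O -> limit_along (power_open K O) p f G -> limit_along O p (fun i => f i k) (G k).
Proof. by move=> topO f_lim B OB BG; exact: (f_lim _ (power_open_coord k topO OB) BG). Qed.

End FilterLimits.

Lemma limit_cluster {X : Type} {O : (X -> Prop) -> Prop} {p : set_system nat}
  {p_proper : ProperFilter p} {h : nat -> X} {x : X} :
  (forall n, p (fun N => n <= N)) -> limit_along O p h x -> cluster O h x.
Proof.
move=> p_tails h_lim W OW Wx n.
by have [N []] := filter_ex (filterI (p_tails n) (h_lim W OW Wx)); exists N.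
Qed.

Definition late_visits {X : Type} (O : (X -> Prop) -> Prop) (h : nat -> X) (x : X)
  : set_system nat :=
  filter_from (fun nW : nat * (X -> Prop) => O nW.2 /\ nW.2 x)
              (fun nW N => nW.1 <= N /\ nW.2 (h N)).

Section LateVisits.
Context {X : Type} {O : (X -> Prop) -> Prop} {h : nat -> X} {x : X}.
Hypothesis topO : is_topology O.

Lemma late_visits_proper : cluster O h x -> ProperFilter (late_visits O h x).
Proof.
have [OT [_ OI]] := topO; move=> x_cl; apply: filter_from_proper.
- apply: filter_from_filter; first by exists (0, fun _ => True).
  move=> [n1 W1] [n2 W2] /= [OW1 W1x] [OW2 W2x].
  exists (Nat.max n1 n2, fun y => W1 y /\ W2 y); first by split; [apply: OI|].
  by move=> N /= [nN [W1N W2N]]; split; split=> //; lia.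
- by move=> [n W] /= [OW Wx]; have [N] := x_cl W OW Wx n; exists N.
Qed.

Lemma late_visits_tails n : late_visits O h x (fun N => n <= N).
Proof. by exists (n, fun _ => True) => [|N []] //; split=> //; case: topO. Qed.

Lemma late_visits_limit : limit_along O (late_visits O h x) h x.
Proof. by move=> V OV Vx; exists (0, V) => // N []. Qed.

End LateVisits.

Section AdjunctionLimits.
Context {D M : Type} {OM : (M -> Prop) -> Prop} {pi : D -> M}.
Context {I : Type} {p : set_system I} {x : I -> adj_space pi}.

Let base (i : I) : option D := fst (proj1_sig (x i)).
Let fibre (i : I) : M := snd (proj1_sig (x i)).

(* The points of D \cup_pi M lying over a point d of D are isolated. *)
Lemma adj_limit_at_point {p_filter : Filter p} (d : D) :
  p (fun i => base i = Some d) ->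
  exists y, limit_along (adj_open OM pi) p x y.
Proof.
move=> p_d; exists (exist (adj_pred pi) (Some d, pi d) erefl).
move=> V [Vo [_ V_Vo]] /V_Vo Vo_d; apply: filterS p_d => i base_d.
apply/V_Vo; suff -> : proj1_sig (x i) = (Some d, pi d) by [].
rewrite /base in base_d; case: (x i) base_d => [[o m] /= xi_adj] base_d.
by rewrite base_d /adj_pred /= in xi_adj *; rewrite xi_adj.
Qed.

(* If no point of D carries p-almost all of x, then x converges along p to
   (oo, m) for every limit m of its fibres: basic neighbourhoods of (oo, m)
   are A x B with A cofinite, and p-almost all x i avoid the finitely many
   points of D outside A. *)
Lemma adj_limit_at_infinity {p_ultra : UltraFilter p} (m : M) :
  (forall d, ~ p (fun i => base i = Some d)) -> limit_along OM p fibre m ->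
  limit_along (adj_open OM pi) p x (exist (adj_pred pi) (None, m) Logic.I).
Proof.
move=> not_finite fibre_lim V [Vo [Vo_open V_Vo]] /V_Vo Vo_oo.
have [A [B [OA [OB [A_oo [Bm AB_Vo]]]]]] := Vo_open _ Vo_oo.
have [L A_cofinite] := OA A_oo.
apply: filterS (filterI (ultra_avoid_list _ L not_finite) (fibre_lim B OB Bm)).
move=> i [avoid_L B_fibre]; apply/V_Vo/AB_Vo => //.
rewrite /base in avoid_L; case: (fst (proj1_sig (x i))) avoid_L => [d|] // avoid_L.
by apply: contrapT => notAd; apply: (avoid_L d (A_cofinite d notAd)).
Qed.

Lemma adj_limit {p_ultra : UltraFilter p} (m : M) :
  limit_along OM p fibre m -> exists y, limit_along (adj_open OM pi) p x y.
Proof.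
move=> fibre_lim; have [[d p_d]|not_finite] := pselect (exists d, p (fun i => base i = Some d)).
- exact: adj_limit_at_point p_d.
- by eexists; apply: adj_limit_at_infinity fibre_lim => d p_d; apply: not_finite; exists d.
Qed.

End AdjunctionLimits.

Theorem proposition1p4 (D M : Type) (OM : (M -> Prop) -> Prop) (pi : D -> M) (K : Type) :
  is_topology OM -> hausdorff OM ->
  countably_compact (power_open K OM) ->
  countably_compact (power_open K (adj_open OM pi)).
Proof.
move=> topM _ ccM; apply: cluster_countably_compact => f.
pose h N k := snd (proj1_sig (f N k)).
have topMK := power_is_topology K topM.
have [g g_cl] := countably_compact_cluster topMK ccM h.
have [p [p_ultra visits_p]] := ultraFilterLemma (late_visits_proper topMK g_cl).
have h_lim : limit_along (power_open K OM) p h g.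
  by move=> W OW Wg; apply/visits_p/late_visits_limit.
have coord_lim k : exists y, limit_along (adj_open OM pi) p (fun N => f N k) y.
  exact: adj_limit (coord_limit k topM h_lim).
have [G G_lim] := choice coord_lim.
exists G; apply: limit_cluster (power_limit G_lim) => n.
by apply/visits_p/late_visits_tails.
Qed.
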